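(* Let $M$ be a proper metric space, $X_1,\dots,X_n$ a coarsely transverse collection of half spaces, and for $0\le k\le n-1$ let $\mathcal{X}_k=\partial X_{k+1}\Cap\dots\Cap\partial X_n$, and $\mathcal{X}_n=\{M\}$. Then for every $0\le k\le n$, $\mathbf 1\wedge X_1\wedge\dots\wedge X_k\in CX^k_\alpha(\mathcal{X}_k)$.
   Context: Borel sets are identified with indicator functions; $\mathbf 1$ is the constant function. For $Y\subseteq M$, $Y_R=\{x:d(x,Y)\le R\}$. Coarsely transverse half spaces: Borel sets with $\bigcap_i (X_i)_R\cap(X_i^c)_R$ bounded for all $R$. A big family is a collection of subsets closed under subsets, finite unions and thickenings; $\{Y\}=\{Z:Z\subseteq Y_R\text{ for some }R\}$; $\mathcal{X}\Cap\mathcal{Y}=\{X\cap Y:X\in\mathcal X, Y\in\mathcal Y\}$; $\partial X=\{X\}\Cap\{X^c\}$; $\{M\}$ is the family of all subsets. For a big family $\mathcal{Y}$, $CX^k_\alpha(\mathcal{Y})$ is the space of anti-symmetric locally bounded Borel functions $\theta:M^{k+1}\to\mathbb{C}$ such that $\mathrm{supp}(\theta)\cap\Delta_R\cap Y^{k+1}$ is bounded for all $R>0$ and $Y\in\mathcal{Y}$, where $M^{k+1}$ has the max metric and $\Delta_R$ is the $R$-thickening of the multi-diagonal. $f_0\wedge\dots\wedge f_k=\sum_{\sigma\in S_{k+1}}\mathrm{sgn}(\sigma)f_{\sigma_0}\otimes\dots\otimes f_{\sigma_k}$. *)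

From HB Require Import structures.
From mathcomp Require Import all_boot all_order all_algebra all_fingroup.
From mathcomp Require Import boolp classical_sets.
From mathcomp Require Import Rstruct.
From mathcomp Require Import complex.
From Stdlib Require Import Rdefinitions.

Set Implicit Arguments.
Unset Strict Implicit.
Unset Printing Implicit Defensive.

Import Order.TTheory GRing.Theory Num.Theory.
Import ComplexField Normc.

Local Open Scope ring_scope.
Local Open Scope classical_set_scope.

Notation C := (Rdefinitions.R[i]).

Section GenericMetric.
Variables (T : Type) (d : T -> T -> R).

Definition is_metric : Prop :=
  [/\ forall x y, 0 <= d x y,
      forall x y, d x y = 0 <-> x = y,
      forall x y, d x y = d y x &
      forall x y z, d x z <= d x y + d y z].

Definition mball (x : T) (r : R) : set T := [set y | d x y < r].
Definition cball (x : T) (r : R) : set T := [set y | d x y <= r].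

Definition mopen (U : set T) : Prop :=
  forall x, U x -> exists2 r : R, 0 < r & mball x r `<=` U.

Definition mclosed (F : set T) : Prop := mopen (~` F).

Definition mcompact (K : set T) : Prop :=
  forall (I : Type) (U : I -> set T),
    (forall i, mopen (U i)) -> K `<=` \bigcup_i U i ->
    exists s : seq I, K `<=` (fun x => exists2 i, List.In i s & U i x).

Definition mproper : Prop := forall x r, mcompact (cball x r).

Definition mbounded (A : set T) : Prop :=
  exists r : R, forall x y, A x -> A y -> d x y <= r.

Definition is_sigma_algebra (S : set (set T)) : Prop :=
  [/\ S set0,
      forall A, S A -> S (~` A) &
      forall F : nat -> set T, (forall n, S (F n)) -> S (\bigcup_n F n)].

Definition borel (A : set T) : Prop :=
  forall S : set (set T), is_sigma_algebra S ->
    (forall U, mopen U -> S U) -> S A.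

(* Y_R = {x : d(x,Y) <= R}, with d(x,Y) = inf_{y in Y} d(x,y);
   "inf <= R" is written out as: for every eps > 0 some y in Y is
   within R + eps of x. *)
Definition thick (Y : set T) (r : R) : set T :=
  [set x | forall eps : R, 0 < eps -> exists2 y, Y y & d x y < r + eps].

Definition locally_bounded (f : T -> C) : Prop :=
  forall x, exists2 r : R, 0 < r &
    exists M : R, forall y, mball x r y -> normc (f y) <= M.

End GenericMetric.

Definition dC (z w : C) : R := normc (z - w).

Definition borel_fun (T : Type) (d : T -> T -> R) (f : T -> C) : Prop :=
  forall B : set C, borel dC B -> borel d (f @^-1` B).

Definition dprod (M : Type) (d : M -> M -> R) (k : nat)
    (x y : 'I_k.+1 -> M) : R :=
  \big[Num.max/0]_(i < k.+1) d (x i) (y i).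

Definition diagonal (M : Type) (k : nat) : set ('I_k.+1 -> M) :=
  [set x | exists m : M, forall i, x i = m].

Definition Delta (M : Type) (d : M -> M -> R) (k : nat) (r : R)
    : set ('I_k.+1 -> M) :=
  thick (@dprod M d k) (@diagonal M k) r.

Definition power_set (M : Type) (k : nat) (Y : set M) : set ('I_k.+1 -> M) :=
  [set x | forall i, Y (x i)].

Definition fsupp (T : Type) (f : T -> C) : set T := [set x | f x != 0].

Definition family (M : Type) := set (set M).

Definition fam_of (M : Type) (d : M -> M -> R) (Y : set M) : family M :=
  [set Z | exists r : R, Z `<=` thick d Y r].

Definition fam_cap (M : Type) (F G : family M) : family M :=
  [set Z | exists A, exists B, [/\ F A, G B & Z = A `&` B]].

Definition fam_boundary (M : Type) (d : M -> M -> R) (X : set M) : family M :=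
  fam_cap (fam_of d X) (fam_of d (~` X)).

Definition fam_all (M : Type) : family M := [set _ | True].

(* F j cap-cap F (j+1) cap-cap ... cap-cap F (j+len-1); the empty
   iterated intersection is {M} *)
Fixpoint fam_capn (M : Type) (F : nat -> family M) (j len : nat) : family M :=
  match len with
  | 0 => @fam_all M
  | 1 => F j
  | S l => fam_cap (F j) (fam_capn F j.+1 l)
  end.

(* X_k = partial X_{k+1} cap-cap ... cap-cap partial X_n  (k <= n-1),
   X_n = {M}; here X is indexed from 1 *)
Definition calX (M : Type) (d : M -> M -> R) (X : nat -> set M) (n k : nat)
    : family M :=
  fam_capn (fun i => fam_boundary d (X i)) k.+1 (n - k).

Definition coarsely_transverse (M : Type) (d : M -> M -> R)
    (X : nat -> set M) (n : nat) : Prop :=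
  (forall i : nat, (leq 1 i && leq i n) -> borel d (X i)) /\
  forall r : R, mbounded d
    [set x | forall i : nat, (leq 1 i && leq i n) ->
               thick d (X i) r x /\ thick d (~` X i) r x].

Definition CXalpha (M : Type) (d : M -> M -> R) (k : nat) (Y : family M)
    : set (('I_k.+1 -> M) -> C) :=
  [set theta |
    [/\
        forall (s : 'S_k.+1) (x : 'I_k.+1 -> M),
          theta (fun i => x (s i)) = (-1) ^+ s * theta x,
        locally_bounded (@dprod M d k) theta,
        borel_fun (@dprod M d k) theta &
        forall (r : R) (Z : set M), 0 < r -> Y Z ->
          mbounded (@dprod M d k)
            (fsupp theta `&` @Delta M d k r `&` @power_set M k Z)]].

Definition indic (T : Type) (A : set T) (x : T) : C := (`[< A x >])%:R.

Definition wedge (M : Type) (k : nat) (f : 'I_k.+1 -> M -> C)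
    (x : 'I_k.+1 -> M) : C :=
  \sum_(s : 'S_k.+1) (-1) ^+ s * \prod_(i < k.+1) f (s i) (x i).

Definition wedge_one_X (M : Type) (X : nat -> set M) (k : nat)
    : ('I_k.+1 -> M) -> C :=
  wedge (fun i : 'I_k.+1 => if i == ord0 then (fun _ => 1) else indic (X i)).

(* Imported first: loaded after ssrnat it would rebind the %N scope key. *)
From Stdlib Require Import Rdefinitions.
From mathcomp Require Import all_boot all_order all_algebra.
From mathcomp Require Import perm lra.
From mathcomp Require Import Rstruct classical_sets boolp complex.

(* Writing 1 /\ X_1 /\ ... /\ X_k as the determinant of the matrix whose row i is
   (1, X_1(x_i), ..., X_k(x_i)), antisymmetry is the sign change under row
   permutations, and the value depends only on the finitely many Borel tests
   X_j(x_i), so it is Borel and bounded.  If the determinant is nonzero, no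
   indicator column is constant, so each X_j (j <= k) and its complement meet
   the tuple; near the diagonal all x_i are within 2(r+1) of x_0, so x_0 lies
   in the thickenings of X_j and X_j^c for j <= k, and for j > k this comes
   from the tuple lying in a set of X_k.  Coarse transversality bounds the set
   of such x_0. *)

Set Implicit Arguments.
Unset Strict Implicit.
Unset Printing Implicit Defensive.

Import Order.TTheory GRing.Theory Num.Theory.
Import ComplexField Normc.

Local Open Scope ring_scope.
Local Open Scope classical_set_scope.

Section Borel.
Variables (T : Type) (d : T -> T -> R).

Lemma borel0 : borel d set0.
Proof. by move=> S []. Qed.

Lemma borelC A : borel d A -> borel d (~` A).
Proof. by move=> bA S Ssig Sopen; case: (Ssig) => _ SC _; apply: SC; apply: bA. Qed.

Lemma borel_bigcup (F : nat -> set T) :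
  (forall n, borel d (F n)) -> borel d (\bigcup_n F n).
Proof. by move=> bF S Ssig Sopen; case: (Ssig) => _ _ SU; apply: SU => n; apply: bF. Qed.

Lemma borelU A B : borel d A -> borel d B -> borel d (A `|` B).
Proof.
move=> bA bB.
have -> : A `|` B = \bigcup_n (if n is 0 then A else B).
  apply/seteqP; split=> x /=; first by case=> ?; [exists 0%N | exists 1%N].
  by case=> -[|n] _ ?; [left | right].
by apply: borel_bigcup => -[|n].
Qed.

Lemma borel_bigcup_seq (I : eqType) (s : seq I) (F : I -> set T) :
  (forall i, borel d (F i)) -> borel d [set x | exists2 i, i \in s & F i x].
Proof.
move=> bF; elim: s => [|a s IHs].
  have -> : [set x | exists2 i, i \in [::] & F i x] = set0.
    by apply/seteqP; split=> x // [].
  exact: borel0.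
have -> : [set x | exists2 i, i \in a :: s & F i x] =
          F a `|` [set x | exists2 i, i \in s & F i x].
  apply/seteqP; split=> x /=.
    by case=> i; rewrite in_cons => /orP[/eqP-> | si] Fix; [left | right; exists i].
  case=> [Fax | [i si Fix]]; first by exists a; rewrite ?mem_head.
  by exists i; rewrite // in_cons si orbT.
exact: borelU.
Qed.

Lemma borel_bigcap_seq (I : eqType) (s : seq I) (F : I -> set T) :
  (forall i, borel d (F i)) -> borel d [set x | forall i, i \in s -> F i x].
Proof.
move=> bF.
have -> : [set x | forall i, i \in s -> F i x] =
          ~` [set x | exists2 i, i \in s & (~` F i) x].
  apply/seteqP; split=> x /=; first by move=> Fx [i si]; apply; apply: Fx.
  by move=> Fx i si; apply: contrapT => nFix; apply: Fx; exists i.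
by apply: borelC; apply: borel_bigcup_seq => i; apply: borelC.
Qed.

Lemma borel_fun_finite_tests (I : finType) (P : I -> set T)
    (g : {ffun I -> bool} -> C) :
  (forall i, borel d (P i)) ->
  borel_fun d (fun x => g [ffun i => `[< P i x >]]).
Proof.
move=> bP B _.
pose fibre (v : {ffun I -> bool}) :=
  [set x | forall i, i \in enum I -> (if v i then P i else ~` P i) x].
have bfibre v : borel d (fibre v).
  by apply: borel_bigcap_seq => i; case: (v i); [apply: bP | apply: borelC; apply: bP].
have fibreP v x : fibre v x <-> [ffun i => `[< P i x >]] = v.
  split=> [Fx | <- i _]; last by rewrite ffunE; case: asboolP.
  apply/ffunP => i; rewrite ffunE; have := Fx i (mem_enum _ i).
  by case: (v i) => [/asboolP | /asboolPn/negbTE].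
have -> : (fun x => g [ffun i => `[< P i x >]]) @^-1` B =
          [set x | exists2 v, v \in [seq v <- enum {: {ffun I -> bool}} | `[< B (g v) >]]
                            & fibre v x].
  apply/seteqP; split=> x /=.
    move=> Bx; exists [ffun i => `[< P i x >]]; last exact/fibreP.
    by rewrite mem_filter mem_enum andbT; apply/asboolP.
  by case=> v; rewrite mem_filter => /andP[/asboolP Bv _] /fibreP ->.
exact: borel_bigcup_seq.
Qed.

End Borel.

Lemma le_dprod (M : Type) (d : M -> M -> R) k (x y : 'I_k.+1 -> M) i :
  d (x i) (y i) <= dprod d x y.
Proof. exact: (le_bigmax _ (fun j => d (x j) (y j)) i). Qed.

Lemma borel_coord (M : Type) (d : M -> M -> R) k (i : 'I_k.+1) (A : set M) :
  borel d A -> borel (@dprod M d k) [set x | A (x i)].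
Proof.
move=> bA S Ssig Sopen.
pose S' := [set B : set M | S [set x : 'I_k.+1 -> M | B (x i)]].
have S'sig : is_sigma_algebra S'.
  case: Ssig => S0 SC SU; split=> [| B | F]; [| exact: SC | exact: SU].
  by rewrite /S' /= (_ : [set x | _] = set0) //; apply/seteqP; split.
apply: (bA S' S'sig) => U Uopen; apply: Sopen => x Ux.
have [r r0 rU] := Uopen _ Ux; exists r => // y xy; apply: rU.
exact: le_lt_trans (le_dprod _ _ _ i) xy.
Qed.

Lemma wedge_det (M : Type) k (f : 'I_k.+1 -> M -> C) x :
  wedge f x = \det (\matrix_(i, j) f j (x i)).
Proof.
apply: eq_bigr => s _; congr (_ * _).
by apply: eq_bigr => i _; rewrite mxE.
Qed.

Lemma wedge_perm (M : Type) k (f : 'I_k.+1 -> M -> C) (s : 'S_k.+1) x :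
  wedge f (fun i => x (s i)) = (-1) ^+ s * wedge f x.
Proof.
rewrite !wedge_det -det_perm -det_mulmx -row_permE; congr (\det _).
by apply/matrixP => i j; rewrite !mxE.
Qed.

Section WedgeOneX.
Variables (M : Type) (X : nat -> set M) (k : nat).

Definition one_X_test (p : 'I_k.+1 * 'I_k.+1) : set ('I_k.+1 -> M) :=
  [set x | p.2 != ord0 /\ X p.2 (x p.1)].

Definition one_X_det (v : {ffun 'I_k.+1 * 'I_k.+1 -> bool}) : C :=
  \det (\matrix_(i, j) if j == ord0 then 1 else (v (i, j))%:R).

Lemma wedge_one_XE x :
  @wedge_one_X M X k x = one_X_det [ffun p => `[< one_X_test p x >]].
Proof.
rewrite /wedge_one_X wedge_det; congr (\det _); apply/matrixP => i j.
rewrite !mxE ffunE; case: eqP => //= /eqP j0.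
by rewrite /indic (@asbool_equiv_eq _ (one_X_test (i, j) x)) //; split=> [|[]].
Qed.

Lemma wedge_one_X_bounded : exists b : R, forall x, normc (@wedge_one_X M X k x) <= b.
Proof.
exists (\big[Num.max/0]_v normc (one_X_det v)) => x.
by rewrite wedge_one_XE; apply: (le_bigmax _ (fun v => normc (one_X_det v))).
Qed.

Lemma borel_fun_wedge_one_X (d : M -> M -> R) :
  (forall j : 'I_k.+1, j != ord0 -> borel d (X j)) ->
  borel_fun (@dprod M d k) (@wedge_one_X M X k).
Proof.
move=> bX; have -> : @wedge_one_X M X k =
    (fun x => one_X_det [ffun p => `[< one_X_test p x >]]).
  by apply/funext => x; apply: wedge_one_XE.
apply: borel_fun_finite_tests => -[i j].
have [-> | j0] := eqVneq j ord0.
  have -> : one_X_test (i, ord0) = set0 by apply/seteqP; split=> x // [].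
  exact: borel0.
have -> : one_X_test (i, j) = [set x | X j (x i)].
  by apply/seteqP; split=> x //= [].
by apply: borel_coord; apply: bX.
Qed.

(* A constant indicator column is zero or equals the column of ones. *)
Lemma wedge_one_X_straddles (j : 'I_k.+1) x :
  j != ord0 -> @wedge_one_X M X k x != 0 ->
  (exists i, X j (x i)) /\ (exists i, ~ X j (x i)).
Proof.
move=> j0 wx0; rewrite /wedge_one_X wedge_det -det_tr in wx0.
split; apply: contrapT => nex; move/eqP: wx0; apply.
  rewrite (expand_det_row _ j); apply: big1 => i _.
  by rewrite !mxE (negbTE j0) /indic asboolF ?mul0r // => Xi; apply: nex; exists i.
apply: (determinant_alternate (i1 := ord0) (i2 := j)); first by rewrite eq_sym.
move=> i; rewrite !mxE /= (negbTE j0) /indic asboolT //.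
by apply: contrapT => nXi; apply: nex; exists i.
Qed.

End WedgeOneX.

Section Thickenings.
Variables (M : Type) (d : M -> M -> R).

Definition near_boundaries (X : nat -> set M) (I : nat -> bool) (r : R) : set M :=
  [set x | forall i, I i -> thick d (X i) r x /\ thick d (~` X i) r x].

Lemma thick_le (Y : set M) (r r' : R) : r <= r' -> thick d Y r `<=` thick d Y r'.
Proof.
move=> rr' x Yx eps eps0; have [y Yy xy] := Yx eps eps0.
by exists y => //; apply: lt_le_trans xy _; rewrite lerD2r.
Qed.

Lemma thick_of_dist (Y : set M) (r : R) x y : Y y -> d x y <= r -> thick d Y r x.
Proof. by move=> Yy xy eps eps0; exists y => //; apply: le_lt_trans xy _; rewrite ltrDl. Qed.

Lemma near_boundaries_le X I (r r' : R) :
  r <= r' -> near_boundaries X I r `<=` near_boundaries X I r'.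
Proof. by move=> rr' x nx i Ii; have [] := nx i Ii; split; apply: thick_le rr' _ _. Qed.

Lemma fam_boundary_near (Y Z : set M) :
  fam_boundary d Y Z -> exists r : R, Z `<=` near_boundaries (fun=> Y) xpredT r.
Proof.
case=> A [B [[r1 Ar1] [r2 Br2] ->]]; exists (Num.max r1 r2) => x [Ax Bx] _.
by split; [apply: thick_le (Ar1 x Ax) | apply: thick_le (Br2 x Bx)];
  rewrite le_max lexx ?orbT.
Qed.

Lemma fam_capn_boundary_near (X : nat -> set M) len : forall j Z,
  fam_capn (fun i => fam_boundary d (X i)) j len Z ->
  exists r : R, Z `<=` near_boundaries X (fun i => j <= i < j + len)%N r.
Proof.
elim: len => [|[|len] IHlen] j Z /=.
- by move=> _; exists 0 => x _ i; rewrite addn0 => /andP[ji]; rewrite ltnNge ji.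
- move=> /fam_boundary_near[r Zr]; exists r => x Zx i.
  by rewrite addn1 ltnS -eqn_leq => /eqP <-; apply: Zr.
case=> A [B [/fam_boundary_near[r1 Ar1] /IHlen[r2 Br2] ->]].
exists (Num.max r1 r2) => x [Ax Bx] i /andP[ji ilt].
have [<- | jNi] := eqVneq j i.
  by apply: (near_boundaries_le _ (Ar1 x Ax)) => //; rewrite le_max lexx.
apply: (near_boundaries_le _ (Br2 x Bx)); first by rewrite le_max lexx orbT.
by rewrite ltn_neqAle jNi ji addSnnS.
Qed.

End Thickenings.

Section Metric.
Variables (M : Type) (d : M -> M -> R).
Hypotheses (d_ge0 : forall x y, 0 <= d x y) (d_sym : forall x y, d x y = d y x)
  (d_tri : forall x y z, d x z <= d x y + d y z).

Lemma Delta_dist k (r : R) (x : 'I_k.+1 -> M) i j :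
  Delta d r x -> d (x i) (x j) <= 2 * (r + 1).
Proof.
move=> /(_ 1 ltr01)[y [m ym] dxy].
have xl_m l : d (x l) m < r + 1.
  by rewrite -(ym l); apply: le_lt_trans (le_dprod _ _ _ l) dxy.
apply: le_trans (d_tri _ m _) _; rewrite (d_sym m).
by have := xl_m i; have := xl_m j; lra.
Qed.

Lemma mbounded_dprod_near_ord0 k (B : set M) (s : R) :
  mbounded d B ->
  mbounded (@dprod M d k) [set x | B (x ord0) /\ forall i, d (x i) (x ord0) <= s].
Proof.
case=> b Bb; exists (s + b + s) => x y [Bx xs] [By ys].
have s_ge0 : 0 <= s by apply: le_trans (xs ord0).
have b_ge0 : 0 <= b by apply: le_trans (Bb _ _ Bx Bx).
apply: bigmax_le => [|i _]; first by rewrite !addr_ge0.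
apply: le_trans (d_tri _ (x ord0) _) _.
apply: le_trans (lerD (lexx _) (d_tri _ (y ord0) _)) _.
by rewrite addrA (d_sym _ (y i)); apply: lerD; [apply: lerD|];
  [apply: xs | apply: Bb | apply: ys].
Qed.

Lemma supp_wedge_one_X_Delta_near (X : nat -> set M) k (r : R) x :
  @wedge_one_X M X k x != 0 -> Delta d r x ->
  near_boundaries d X (fun i => 0 < i <= k)%N (2 * (r + 1)) (x ord0).
Proof.
move=> wx0 Dx i /andP[i0 ik]; rewrite -ltnS in ik.
have [|[l Xl] [l' nXl']] := wedge_one_X_straddles (j := Ordinal ik) _ wx0.
  by rewrite -val_eqE /= -lt0n.
by split; [apply: (thick_of_dist Xl) | apply: (thick_of_dist (Y := ~` X i) nXl')];
  apply: Delta_dist.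
Qed.

Lemma supp_wedge_one_X_near (X : nat -> set M) n k (r rZ : R) (Z : set M) :
  (k <= n)%N ->
  Z `<=` near_boundaries d X (fun i => k.+1 <= i < k.+1 + (n - k))%N rZ ->
  fsupp (@wedge_one_X M X k) `&` Delta d r `&` @power_set M k Z `<=`
    [set x | near_boundaries d X (fun i => 0 < i <= n)%N
               (Num.max rZ (2 * (r + 1))) (x ord0) /\
             forall i, d (x i) (x ord0) <= 2 * (r + 1)].
Proof.
move=> kn ZrZ x [[/= wx0 Dx] Zx]; split=> [|i]; last exact: Delta_dist.
have near_low := supp_wedge_one_X_Delta_near wx0 Dx.
have near_high := ZrZ _ (Zx ord0).
move=> i /andP[i0 iN]; have [ik | ki] := leqP i k.
  apply: (near_boundaries_le _ near_low); first by rewrite le_max lexx orbT.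
  by rewrite i0.
apply: (near_boundaries_le _ near_high); first by rewrite le_max lexx.
by rewrite ki addSn subnKC // ltnS.
Qed.

End Metric.

Theorem lemma5p1 (M : Type) (d : M -> M -> R) (n : nat) (X : nat -> set M) :
  is_metric d -> mproper d ->
  coarsely_transverse d X n ->
  forall k : nat, (k <= n)%N ->
    @CXalpha M d k (calX d X n k) (@wedge_one_X M X k).
Proof.
move=> [d_ge0 _ d_sym d_tri] _ [bX transverse] k kn.
split.
- exact: wedge_perm.
- have [b wb] := wedge_one_X_bounded X k.
  by move=> x; exists 1; [exact: ltr01 | exists b => y _; apply: wb].
- apply: borel_fun_wedge_one_X => j j0; apply: bX.
  by move: j0; rewrite -val_eqE -lt0n (leq_trans (leq_ord j) kn) andbT.
move=> r Z _ /fam_capn_boundary_near[rZ ZrZ].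
have [b supp_b] := mbounded_dprod_near_ord0 d_ge0 d_sym d_tri k (2 * (r + 1))
  (transverse (Num.max rZ (2 * (r + 1)))).
have supp_near := supp_wedge_one_X_near d_sym d_tri (r := r) kn ZrZ.
by exists b => x y /supp_near Sx /supp_near Sy; apply: supp_b.
Qed.
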